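(* Let $\{\mathcal G,(\Gamma_0,\Gamma_1),(\widetilde\Gamma_0,\widetilde\Gamma_1)\}$ be a triple for the adjoint pair $\{S,\widetilde S\}$ such that $\rho(A_0)$ and $\rho(\widetilde A_0)$ are nonempty, and let $M,\widetilde M$ be the associated Weyl functions. Let $B_1,B_2,\widetilde B_1,\widetilde B_2$ be linear operators in $\mathcal G$. Then for all $\lambda\in\rho(A_0)$ and $\mu\in\rho(\widetilde A_0)$: (i) $\lambda\in\sigma_p(A_{B_1B_2})$ if and only if $\ker(I-B_2M(\lambda)B_1)\neq\{0\}$, and in this case $\ker(A_{B_1B_2}-\lambda)=\{f_\lambda\in\ker(T-\lambda):\Gamma_0f_\lambda=B_1\varphi \text{ for some }\varphi\in\ker(I-B_2M(\lambda)B_1)\}$; (ii) $\mu\in\sigma_p(\widetilde A_{\widetilde B_1\widetilde B_2})$ if and only if $\ker(I-\widetilde B_2\widetilde M(\mu)\widetilde B_1)\neq\{0\}$, and in this case $\ker(\widetilde A_{\widetilde B_1\widetilde B_2}-\mu)=\{g_\mu\in\ker(\widetilde T-\mu):\widetilde\Gamma_0g_\mu=\widetilde B_1\psi\text{ for some }\psi\in\ker(I-\widetilde B_2\widetilde M(\mu)\widetilde B_1)\}$.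
   Context: Let $\mathfrak H$ be a separable Hilbert space. An adjoint pair $\{S,\widetilde S\}$ consists of densely defined closed operators $S,\widetilde S$ in $\mathfrak H$ with $(Sf,g)=(f,\widetilde Sg)$ for all $f\in\operatorname{dom}S$, $g\in\operatorname{dom}\widetilde S$. Fix operators $T\subset S^*$ and $\widetilde T\subset\widetilde S^*$ which are cores, i.e. $\overline T=S^*$ and $\overline{\widetilde T}=\widetilde S^*$. A triple $\{\mathcal G,(\Gamma_0,\Gamma_1),(\widetilde\Gamma_0,\widetilde\Gamma_1)\}$ for $\{S,\widetilde S\}$ consists of a Hilbert space $\mathcal G$ and linear maps $\Gamma_0,\Gamma_1:\operatorname{dom}T\to\mathcal G$, $\widetilde\Gamma_0,\widetilde\Gamma_1:\operatorname{dom}\widetilde T\to\mathcal G$. Put $A_0:=T\upharpoonright\ker\Gamma_0$ and $\widetilde A_0:=\widetilde T\upharpoonright\ker\widetilde\Gamma_0$. For $\lambda\in\rho(A_0)$ one has $\operatorname{dom}T=\ker\Gamma_0\dotplus\ker(T-\lambda)$, so $\Gamma_0\upharpoonright\ker(T-\lambda)$ is injective; similarly for $\widetilde T$. The $\gamma$-fields are $\gamma(\lambda):=(\Gamma_0\upharpoonright\ker(T-\lambda))^{-1}$, $\widetilde\gamma(\mu):=(\widetilde\Gamma_0\upharpoonright\ker(\widetilde T-\mu))^{-1}$; the Weyl functions are $M(\lambda):=\Gamma_1\gamma(\lambda)$, $\lambda\in\rho(A_0)$, and $\widetilde M(\mu):=\widetilde\Gamma_1\widetilde\gamma(\mu)$,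 $\mu\in\rho(\widetilde A_0)$. Products of (possibly unbounded, non-densely defined) operators have their natural domains, e.g. $\operatorname{dom}(B_1B_2)=\{\varphi\in\operatorname{dom}B_2:B_2\varphi\in\operatorname{dom}B_1\}$. Define $A_{B_1B_2}f:=Tf$ on $\operatorname{dom}A_{B_1B_2}:=\{f\in\operatorname{dom}T:\Gamma_1f\in\operatorname{dom}(B_1B_2),\ B_1B_2\Gamma_1f=\Gamma_0f\}$ and $\widetilde A_{\widetilde B_1\widetilde B_2}g:=\widetilde Tg$ on $\operatorname{dom}\widetilde A_{\widetilde B_1\widetilde B_2}:=\{g\in\operatorname{dom}\widetilde T:\widetilde\Gamma_1g\in\operatorname{dom}(\widetilde B_1\widetilde B_2),\ \widetilde B_1\widetilde B_2\widetilde\Gamma_1g=\widetilde\Gamma_0g\}$. $\sigma_p$ denotes the set of eigenvalues. *)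

(* Complex scalars are R[i] (complex numbers over a
   real type R); Hilbert spaces are complete normed R[i]-modules whose norm
   comes from an inner product (linear in the first argument). *)
From mathcomp Require Import all_boot all_order all_algebra.
From mathcomp Require Import all_classical all_reals all_analysis.
From mathcomp Require Import complex.
Set Implicit Arguments.
Unset Strict Implicit.
Unset Printing Implicit Defensive.
Import Order.TTheory GRing.Theory Num.Theory.
Local Open Scope classical_set_scope.
Local Open Scope ring_scope.

Section Defs.
Variable R : realType.
Notation C := (R[i]).

(* [ip] is an inner product inducing the norm of [H] (H is complete by its
   structure [completeNormedModType]). *)
Definition is_inner_product (H : normedModType C) (ip : H -> H -> C) : Prop :=
  [/\ forall (a : C) (x y z : H), ip (a *: x + y) z = a * ip x z + ip y z,
      forall x y : H, ip y x = (ip x y)^* &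
      forall x : H, ip x x = `|x| ^+ 2].

Definition is_hilbert (H : completeNormedModType C) (ip : H -> H -> C) : Prop :=
  is_inner_product ip.

Definition separable (H : normedModType C) : Prop :=
  exists D : set H, countable D /\ closure D = setT.

(* An operator from U to V: a domain and an action (values off the domain are
   irrelevant). *)
Record op (U V : Type) := Op { dom : set U ; act : U -> V }.

Definition subspace (U : lmodType C) (D : set U) : Prop :=
  D 0 /\ forall (a : C) x y, D x -> D y -> D (a *: x + y).

Definition linear_on (U V : lmodType C) (D : set U) (f : U -> V) : Prop :=
  forall (a : C) x y, D x -> D y -> f (a *: x + y) = a *: f x + f y.

Definition linear_op (U V : lmodType C) (A : op U V) : Prop :=
  subspace (dom A) /\ linear_on (dom A) (act A).

Definition graph (U V : Type) (A : op U V) : set (U * V) :=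
  [set p | dom A p.1 /\ p.2 = act A p.1].

Definition densely_defined (H : normedModType C) (A : op H H) : Prop :=
  closure (dom A) = setT.

Definition closed_op (H : normedModType C) (A : op H H) : Prop :=
  closed (graph A).

Definition adjoint_graph (H : normedModType C) (ip : H -> H -> C) (S : op H H)
  : set (H * H) :=
  [set p | forall f, dom S f -> ip (act S f) p.1 = ip f p.2].

Definition adjoint_pair (H : normedModType C) (ip : H -> H -> C) (S St : op H H)
  : Prop :=
  [/\ linear_op S /\ linear_op St, densely_defined S /\ densely_defined St,
      closed_op S /\ closed_op St &
      forall f g, dom S f -> dom St g -> ip (act S f) g = ip f (act St g)].

Definition core_of_adjoint (H : normedModType C) (ip : H -> H -> C)
  (S T : op H H) : Prop :=
  [/\ linear_op T, graph T `<=` adjoint_graph ip S &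
      closure (graph T) = adjoint_graph ip S].

Definition restrict (U V : Type) (A : op U V) (D : set U) : op U V :=
  Op (dom A `&` D) (act A).

Definition kerf (U V : lmodType C) (f : U -> V) : set U := [set x | f x = 0].

Definition opmul (U V W : Type) (B1 : op V W) (B2 : op U V) : op U W :=
  Op [set x | dom B2 x /\ dom B1 (act B2 x)] (fun x => act B1 (act B2 x)).

Definition ker_minus (U : lmodType C) (A : op U U) (l : C) : set U :=
  [set f | dom A f /\ act A f = l *: f].

Definition ker_I_minus (U : lmodType C) (B : op U U) : set U :=
  [set x | dom B x /\ x - act B x = 0].

Definition point_spectrum (U : lmodType C) (A : op U U) : set C :=
  [set l | exists f, f <> 0 /\ ker_minus A l f].

Definition resolvent (H : normedModType C) (A : op H H) : set C :=
  [set l | (forall g : H, exists! f, dom A f /\ act A f - l *: f = g) /\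
           exists c : C, 0 <= c /\
             forall f, dom A f -> `|f| <= c * `|act A f - l *: f| ].

Definition A0_of (H G : lmodType C) (T : op H H) (Gam0 : H -> G) : op H H :=
  restrict T (kerf Gam0).

(* gamma(lambda) = (Gamma_0 restricted to ker (T - lambda))^{-1} *)
Definition gamma_field (H : normedModType C) (G : lmodType C) (T : op H H)
  (Gam0 : H -> G) (l : C) : op G H :=
  Op (Gam0 @` ker_minus T l)
     (fun phi => xget 0 [set f | ker_minus T l f /\ Gam0 f = phi]).

Definition weyl (H : normedModType C) (G : lmodType C) (T : op H H)
  (Gam0 Gam1 : H -> G) (l : C) : op G G :=
  Op (dom (gamma_field T Gam0 l)) (fun phi => Gam1 (act (gamma_field T Gam0 l) phi)).

Definition A_B (H G : lmodType C) (T : op H H) (Gam0 Gam1 : H -> G)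
  (B1 B2 : op G G) : op H H :=
  Op [set f | dom T f /\ dom (opmul B1 B2) (Gam1 f) /\
              act (opmul B1 B2) (Gam1 f) = Gam0 f]
     (act T).

Definition triple (H G : lmodType C) (T Tt : op H H)
  (Gam0 Gam1 Gamt0 Gamt1 : H -> G) : Prop :=
  [/\ linear_on (dom T) Gam0, linear_on (dom T) Gam1,
      linear_on (dom Tt) Gamt0 & linear_on (dom Tt) Gamt1].

End Defs.

(* For [l] in the resolvent set of [A_0], every element of [dom T] splits
   uniquely as [ker Gamma_0 + ker (T - l)], so [Gamma_0] is injective on
   [ker (T - l)] and [M(l)] maps [Gamma_0 f] to [Gamma_1 f] for every
   [f] in [ker (T - l)].  An eigenvector [f] of [A_{B1 B2}] for [l] is then
   the same thing as an [f] in [ker (T - l)] with [Gamma_0 f = B1 phi], where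
   [phi := B2 Gamma_1 f] satisfies [phi = B2 M(l) B1 phi]; conversely such a
   [phi] is nonzero iff the corresponding [f] is, because [Gamma_0] is
   injective there. *)
From Pilot Require Import Defs.
From mathcomp Require Import all_boot all_order all_algebra.
From mathcomp Require Import all_classical all_reals all_analysis.
From mathcomp Require Import complex.
Set Implicit Arguments.
Unset Strict Implicit.
Unset Printing Implicit Defensive.
Import Order.TTheory GRing.Theory Num.Theory.
Local Open Scope classical_set_scope.
Local Open Scope ring_scope.

Section LinearOn.
Variable R : realType.
Variables U V : lmodType R[i].

Lemma linear_on0 (D : set U) (f : U -> V) : linear_on D f -> D 0 -> f 0 = 0.
Proof.
move=> lin_f D0; have := lin_f 1 0 0 D0 D0.
rewrite scaler0 add0r scale1r => f0_eq.
by apply/(addrI (f 0)); rewrite addr0.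
Qed.

Lemma linear_onB (D : set U) (f : U -> V) x y :
  linear_on D f -> D x -> D y -> f (x - y) = f x - f y.
Proof.
move=> lin_f Dx Dy; have := lin_f (-1) y x Dy Dx.
by rewrite !scaleN1r addrC [- f y + _]addrC.
Qed.

Lemma subspaceB (D : set U) x y : Defs.subspace D -> D x -> D y -> D (x - y).
Proof.
by move=> [_ closedD] Dx Dy; have := closedD (-1) y x Dy Dx; rewrite scaleN1r addrC.
Qed.

Lemma linear_op0 (A : op U V) : linear_op A -> dom A 0 /\ act A 0 = 0.
Proof. by move=> [[D0 _] lin_A]; split => //; exact: linear_on0 lin_A D0. Qed.

End LinearOn.

Lemma resolvent_uniq (R : realType) (H : normedModType R[i]) (A : op H H)
    (l : R[i]) f g :
  resolvent A l ->
  dom A f -> act A f - l *: f = 0 -> dom A g -> act A g - l *: g = 0 -> f = g.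
Proof.
by move=> [/(_ 0) [h [_ uniq_h]] _] Df Af Dg Ag; rewrite -(uniq_h f) ?(uniq_h g).
Qed.

Section WeylFunction.
Variable R : realType.
Variables (H : normedModType R[i]) (G : lmodType R[i]).
Variables (T : op H H) (Gam0 Gam1 : H -> G) (l : R[i]).
Hypotheses (linT : linear_op T) (linGam0 : linear_on (dom T) Gam0)
  (l_resolvent : resolvent (A0_of T Gam0) l).

Lemma ker_minus0 : ker_minus T l 0.
Proof. by have [D0 A0] := linear_op0 linT; split; rewrite // A0 scaler0. Qed.

Lemma Gam0_0 : Gam0 0 = 0.
Proof. exact: linear_on0 linGam0 (linear_op0 linT).1. Qed.

Lemma Gam0_inj_ker_minus f g :
  ker_minus T l f -> ker_minus T l g -> Gam0 f = Gam0 g -> f = g.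
Proof.
move=> [Df Tf] [Dg Tg] eq_Gam0.
have Dfg : dom T (f - g) by apply: subspaceB => //; case: linT.
have A0fg : dom (A0_of T Gam0) (f - g).
  by split => //; rewrite /kerf /= (linear_onB linGam0 Df Dg) eq_Gam0 subrr.
have A00 : dom (A0_of T Gam0) 0.
  by split; [exact: (linear_op0 linT).1 | exact: Gam0_0].
apply/subr0_eq/(resolvent_uniq l_resolvent A0fg _ A00) => /=.
- by rewrite (linear_onB linT.2 Df Dg) Tf Tg scalerBr subrr.
- by rewrite (linear_op0 linT).2 scaler0 subrr.
Qed.

Lemma weyl_Gam0 f : ker_minus T l f ->
  dom (weyl T Gam0 Gam1 l) (Gam0 f) /\ act (weyl T Gam0 Gam1 l) (Gam0 f) = Gam1 f.
Proof.
move=> kf; split; first by exists f.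
set P := [set g | ker_minus T l g /\ Gam0 g = Gam0 f].
have [kg Gam0g] : P (xget 0 P) by apply: xgetPex; exists f.
by rewrite /= (Gam0_inj_ker_minus kg kf Gam0g).
Qed.

Hypothesis linGam1 : linear_on (dom T) Gam1.

Lemma weyl_0 : dom (weyl T Gam0 Gam1 l) 0 /\ act (weyl T Gam0 Gam1 l) 0 = 0.
Proof.
have := weyl_Gam0 ker_minus0.
by rewrite Gam0_0 (linear_on0 linGam1 (linear_op0 linT).1).
Qed.

Variables B1 B2 : op G G.

Let K := ker_I_minus (opmul B2 (opmul (weyl T Gam0 Gam1 l) B1)).
Let AB := A_B T Gam0 Gam1 B1 B2.

Lemma ker_minus_A_B : ker_minus AB l =
  [set f | ker_minus T l f /\ exists phi, K phi /\ Gam0 f = act B1 phi].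
Proof.
apply/seteqP; split => f /=.
- move=> [[Df [[dB2 dB1] /= eq_Gam0]] Tf].
  have [dM actM] := weyl_Gam0 (conj Df Tf).
  split => //; exists (act B2 (Gam1 f)); split => //.
  rewrite /K /ker_I_minus /opmul; cbn -[weyl].
  by rewrite eq_Gam0 actM subrr.
- move=> [kf [phi [[[[dB1 dM] dB2] fixed_phi] eq_Gam0]]].
  have [_ actM] := weyl_Gam0 kf.
  move: dB2 fixed_phi; cbn -[weyl]; rewrite -eq_Gam0 actM => dB2 /subr0_eq eq_phi.
  by case: kf => Df Tf; split => //; split => //=; rewrite -eq_phi.
Qed.

Hypotheses (linB1 : linear_op B1) (linB2 : linear_op B2).

Lemma ker_I_minus0 : K 0.
Proof.
have [dB1 B1_0] := linear_op0 linB1; have [dB2 B2_0] := linear_op0 linB2.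
have [dM M0] := weyl_0.
rewrite /K /ker_I_minus /opmul; cbn -[weyl].
by rewrite B1_0 M0 B2_0 subrr; split; first split.
Qed.

Lemma point_spectrum_A_B : point_spectrum AB l <-> K <> [set 0].
Proof.
split.
- move=> [f [f_neq0]]; rewrite ker_minus_A_B => -[kf [phi [Kphi eq_Gam0]]] K_eq0.
  have phi0 : phi = 0 by rewrite K_eq0 in Kphi.
  apply: f_neq0; apply: Gam0_inj_ker_minus kf ker_minus0 _.
  by rewrite eq_Gam0 phi0 (linear_op0 linB1).2 Gam0_0.
- move=> K_neq0.
  have [phi Kphi phi_neq0] : exists2 phi, K phi & phi <> 0.
    apply: contra_notP K_neq0 => no_phi; apply/seteqP; split => x /=.
    + by move=> Kx; apply: contra_notP no_phi => x_neq0; exists x.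
    + by move=> ->; exact: ker_I_minus0.
  have [[[_ [f kf eq_Gam0]] _] fixed_phi] := Kphi.
  exists f; split; last by rewrite ker_minus_A_B; split => //; exists phi.
  move=> f0; apply: phi_neq0; move: fixed_phi.
  cbn -[weyl]; rewrite -eq_Gam0 f0 Gam0_0 weyl_0.2 (linear_op0 linB2).2.
  by rewrite subr0.
Qed.

End WeylFunction.

Theorem theorem4p2 (R : realType)
  (H : completeNormedModType R[i]) (ipH : H -> H -> R[i])
  (G : completeNormedModType R[i]) (ipG : G -> G -> R[i])
  (S St T Tt : op H H) (Gam0 Gam1 Gamt0 Gamt1 : H -> G)
  (B1 B2 Bt1 Bt2 : op G G) :
  is_hilbert ipH -> separable H -> is_hilbert ipG ->
  adjoint_pair ipH S St ->
  core_of_adjoint ipH S T -> core_of_adjoint ipH St Tt ->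
  triple T Tt Gam0 Gam1 Gamt0 Gamt1 ->
  resolvent (A0_of T Gam0) !=set0 ->
  resolvent (A0_of Tt Gamt0) !=set0 ->
  linear_op B1 -> linear_op B2 -> linear_op Bt1 -> linear_op Bt2 ->
  forall (l mu : R[i]),
  resolvent (A0_of T Gam0) l -> resolvent (A0_of Tt Gamt0) mu ->
  (* (i) *)
  ((point_spectrum (A_B T Gam0 Gam1 B1 B2) l <->
      ker_I_minus (opmul B2 (opmul (weyl T Gam0 Gam1 l) B1)) <> [set 0])
   /\ (point_spectrum (A_B T Gam0 Gam1 B1 B2) l ->
      ker_minus (A_B T Gam0 Gam1 B1 B2) l =
      [set f | ker_minus T l f /\
               exists phi, ker_I_minus (opmul B2 (opmul (weyl T Gam0 Gam1 l) B1)) phi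
                           /\ Gam0 f = act B1 phi]))
  /\
  (* (ii) *)
  ((point_spectrum (A_B Tt Gamt0 Gamt1 Bt1 Bt2) mu <->
      ker_I_minus (opmul Bt2 (opmul (weyl Tt Gamt0 Gamt1 mu) Bt1)) <> [set 0])
   /\ (point_spectrum (A_B Tt Gamt0 Gamt1 Bt1 Bt2) mu ->
      ker_minus (A_B Tt Gamt0 Gamt1 Bt1 Bt2) mu =
      [set g | ker_minus Tt mu g /\
               exists psi, ker_I_minus (opmul Bt2 (opmul (weyl Tt Gamt0 Gamt1 mu) Bt1)) psi
                           /\ Gamt0 g = act Bt1 psi])).
Proof.
move=> _ _ _ _ [linT _ _] [linTt _ _] [lin0 lin1 lint0 lint1] _ _
  linB1 linB2 linBt1 linBt2 l mu l_res mu_res.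
split; split.
- exact: point_spectrum_A_B.
- by move=> _; apply: ker_minus_A_B.
- exact: point_spectrum_A_B.
- by move=> _; apply: ker_minus_A_B.
Qed.
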